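(* Let $\mathcal{S}$ be a subset of $\mathbb{P}^2(\mathbb{F}_q)$ with $|\mathcal{S}|=q+2$, and suppose there is some $P\in\mathcal{S}$ such that no line through $P$ contains at least three points of $\mathcal{S}$. Then after a suitable change of projective coordinates, $\mathcal{S}=\mathcal{S}_f$ for some $f(X)\in\mathbb{F}_q[X]$. Moreover, if there are two such points $P\in\mathcal{S}$, then after a suitable change of coordinates $\mathcal{S}=\mathcal{S}_f$ for some $f(X)\in\mathbb{F}_q[X]$ which permutes $\mathbb{F}_q$.
   Context: $q$ is a prime power. For $f(X)\in\mathbb{F}_q[X]$, $\mathcal{S}_f:=\{(c:f(c):1):c\in\mathbb{F}_q\}\cup\{(1:0:0),(0:1:0)\}\subseteq\mathbb{P}^2(\mathbb{F}_q)$. A polynomial permutes $\mathbb{F}_q$ if the map $c\mapsto f(c)$ is a bijection $\mathbb{F}_q\to\mathbb{F}_q$. *)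

From HB Require Import structures.
From mathcomp Require Import all_boot all_order all_algebra all_field.
Set Implicit Arguments. Unset Strict Implicit. Unset Printing Implicit Defensive.
Import GRing.Theory.
Local Open Scope ring_scope.

(* Points of P^2(F) are represented by their unique normalized homogeneous
   coordinate row vector (x0 : x1 : x2): nonzero, with LAST nonzero coordinate 1. *)
Definition pnormal (F : finFieldType) (v : 'rV[F]_3) : bool :=
  [exists i : 'I_3, (v 0 i == 1) && [forall j : 'I_3, (i < j)%N ==> (v 0 j == 0)]].

Definition P2 (F : finFieldType) := {v : 'rV[F]_3 | pnormal v}.

Definition mk3 (F : finFieldType) (a b c : F) : 'rV[F]_3 :=
  \row_(i < 3) nth 0 [:: a; b; c] i.

Definition peq (F : finFieldType) (u v : 'rV[F]_3) : bool :=
  [exists k : F, (k != 0) && (u == k *: v)].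

Definition pline (F : finFieldType) (l : 'cV[F]_3) : {set P2 F} :=
  [set x : P2 F | val x *m l == 0].

Definition pimage (F : finFieldType) (A : 'M[F]_3) (S : {set P2 F}) : {set P2 F} :=
  [set x : P2 F | [exists y in S, peq (val y *m A) (val x)]].

Definition no_trisecant_through (F : finFieldType) (S : {set P2 F}) (P : P2 F) : Prop :=
  forall l : 'cV[F]_3, l != 0 -> P \in pline l -> (#|S :&: pline l| < 3)%N.

Definition Sf (F : finFieldType) (f : {poly F}) : {set P2 F} :=
  [set x : P2 F | [|| [exists c : F, val x == mk3 c f.[c] 1],
                      val x == mk3 1 0 0 | val x == mk3 0 1 0]].

From HB Require Import structures.
From mathcomp Require Import all_boot all_order all_algebra all_field.
Set Implicit Arguments. Unset Strict Implicit. Unset Printing Implicit Defensive.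
Import GRing.Theory.
Local Open Scope ring_scope.

(* Send a point P of S without trisecants to (0:1:0) and a second point Q of S
   to (1:0:0).  The line x2 = 0 through P already contains Q, so the other q
   points of S are affine points (a : b : 1), and the lines x0 = c x2 through P
   show that distinct ones have distinct abscissae.  By counting, they form the
   graph of a map F -> F, and every map of a finite field is polynomial.  If Q
   has no trisecant either, the lines x1 = c x2 through Q make that map
   injective. *)

Lemma row_free_unitmx_map (F : fieldType) m n (U V : 'M[F]_(m, n)) :
  row_free U -> row_free V -> exists2 A, A \in unitmx & U *m A = V.
Proof.
move=> freeU freeV; have /row_freeP[B UB] := freeU.
have [|A unitA UA] := @complete_unitmx _ _ _ U (B *m V).
  by rewrite mulmxA UB mul1mx (eqP freeU) (eqP freeV).
by exists A; rewrite // -UA mulmxA UB mul1mx.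
Qed.

Section NormalizedPoints.
Variable F : finFieldType.

Lemma mk3E (a b c : F) (j : 'I_3) : mk3 a b c 0 j = nth 0 [:: a; b; c] j.
Proof. by rewrite mxE. Qed.

Lemma mk3_row (u : 'rV[F]_3) : u = mk3 (u 0 0) (u 0 1) (u 0 2).
Proof.
by apply/rowP=> -[[|[|[|//]]] lt_j3]; rewrite mk3E /=; congr (u 0 _); apply: val_inj.
Qed.

Lemma scale_mk3 (k a b c : F) : k *: mk3 a b c = mk3 (k * a) (k * b) (k * c).
Proof. by apply/rowP=> -[[|[|[|//]]] lt_j3]; rewrite !mxE. Qed.

Lemma pnormal_mk3 (a b : F) : pnormal (mk3 a b 1).
Proof.
by apply/existsP; exists 2; rewrite mk3E eqxx; apply/forallP=> -[[|[|[|//]]] ?].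
Qed.

Lemma pnormal_e0 : pnormal (mk3 (1 : F) 0 0).
Proof.
apply/existsP; exists 0; rewrite mk3E eqxx.
by apply/forallP=> -[[|[|[|//]]] ?]; rewrite mk3E /= ?eqxx.
Qed.

Lemma pnormal_e1 : pnormal (mk3 (0 : F) 1 0).
Proof.
apply/existsP; exists 1; rewrite mk3E eqxx.
by apply/forallP=> -[[|[|[|//]]] ?]; rewrite mk3E /= ?eqxx.
Qed.

Lemma pnormal_neq0 (v : 'rV[F]_3) : pnormal v -> v != 0.
Proof.
by case/existsP=> i /andP[vi1 _]; apply: contraTneq vi1 => ->; rewrite mxE eq_sym oner_eq0.
Qed.

Lemma pnormal_scale_eq (u v : 'rV[F]_3) k :
  pnormal u -> pnormal v -> u = k *: v -> u = v.
Proof.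
case/existsP=> i /andP[/eqP ui1 /forallP u0]; case/existsP=> j /andP[/eqP vj1 /forallP v0].
move=> uv; have uvE m : u 0 m = k * v 0 m by rewrite uv mxE.
case: (ltngtP i j) => [lt_ij|lt_ji|/val_inj eq_ij].
- move: (u0 j); rewrite lt_ij uvE vj1 mulr1 => /eqP k0.
  by move: ui1; rewrite uvE k0 mul0r => /eqP; rewrite eq_sym oner_eq0.
- move: (v0 i); rewrite lt_ji => /eqP vi0.
  by move: ui1; rewrite uvE vi0 mulr0 => /eqP; rewrite eq_sym oner_eq0.
- by move: ui1; rewrite uvE eq_ij vj1 mulr1 => k1; rewrite uv k1 scale1r.
Qed.

Lemma peq_scale_pnormal (u x : 'rV[F]_3) k :
  pnormal u -> pnormal x -> peq (k *: u) x -> x = u.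
Proof.
move=> nu nx /existsP[k' /andP[k'0 /eqP kux]].
apply: (pnormal_scale_eq (k := k'^-1 * k)) => //.
by rewrite -scalerA kux scalerA mulVf // scale1r.
Qed.

Lemma peq_scale (u : 'rV[F]_3) k : k != 0 -> peq (k *: u) u.
Proof. by move=> k0; apply/existsP; exists k; rewrite k0 eqxx. Qed.

Lemma row_free_col_pnormal (p q : 'rV[F]_3) :
  pnormal p -> pnormal q -> p != q -> row_free (col_mx p q).
Proof.
move=> np nq pq; apply: inj_row_free => x.
rewrite -[x]hsubmxK mul_row_col (mx11_scalar (lsubmx x)) (mx11_scalar (rsubmx x)).
rewrite !mul_scalar_mx; set a := lsubmx x 0 0; set b := rsubmx x 0 0 => abpq.
have b0 : b = 0.
  apply: contraTeq pq => b_neq0; rewrite negbK eq_sym; apply/eqP.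
  apply: (pnormal_scale_eq (k := - (a / b))) => //; apply: (scalerI b_neq0).
  rewrite scalerA mulrN mulrCA mulfV // mulr1 scaleNr.
  by apply/eqP; rewrite -addr_eq0 addrC abpq.
have a0 : a = 0.
  move: abpq; rewrite b0 scale0r addr0 => /eqP.
  by rewrite scaler_eq0 (negPf (pnormal_neq0 np)) orbF => /eqP.
by rewrite a0 b0 -scalemx1 scale0r row_mx0.
Qed.

Lemma pnormal_frame (p q : 'rV[F]_3) : pnormal p -> pnormal q -> p != q ->
  exists2 A, A \in unitmx & p *m A = mk3 1 0 0 /\ q *m A = mk3 0 1 0.
Proof.
move=> np nq pq; have e01 : mk3 (1 : F) 0 0 != mk3 0 1 0.
  by apply/eqP=> /rowP/(_ 0); rewrite !mk3E /=; apply/eqP; rewrite oner_eq0.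
have [A unitA] := row_free_unitmx_map (row_free_col_pnormal np nq pq)
                                       (row_free_col_pnormal pnormal_e0 pnormal_e1 e01).
by rewrite mul_col_mx => /eq_col_mx[pA qA]; exists A.
Qed.

End NormalizedPoints.

Section Lines.
Variable F : finFieldType.

Definition col3 (a b c : F) : 'cV[F]_3 := \col_(i < 3) nth 0 [:: a; b; c] i.

Lemma in_pline (A : 'M[F]_3) (x : P2 F) a b c :
  (x \in pline (A *m col3 a b c)) =
  ((val x *m A) 0 0 * a + (val x *m A) 0 1 * b + (val x *m A) 0 2 * c == 0).
Proof.
rewrite inE mulmxA [X in X == 0]mx11_scalar -scalemx1 scalemx_eq0 oner_eq0 orbF.
move: (val x *m A) => w; rewrite mxE !big_ord_recl big_ord0 !mxE /= addr0 addrA.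
by congr (w 0 _ * a + w 0 _ * b + w 0 _ * c == 0); apply: val_inj.
Qed.

Lemma mul_unitmx_col3_neq0 (A : 'M[F]_3) a b c :
  A \in unitmx -> [|| a != 0, b != 0 | c != 0] -> A *m col3 a b c != 0.
Proof.
move=> unitA; apply: contraTN => /eqP/(canRL (mulKmx unitA)); rewrite mulmx0 => /colP abc0.
by move: (abc0 0) (abc0 1) (abc0 2); rewrite !mxE /= => -> -> ->; rewrite eqxx.
Qed.

Lemma no_trisecant_eq (S : {set P2 F}) (P x y : P2 F) l :
  no_trisecant_through S P -> l != 0 -> P \in S -> P \in pline l ->
  x \in S -> y \in S -> x \in pline l -> y \in pline l -> x != P -> y != P -> x = y.
Proof.
move=> ntP l0 PS Pl xS yS xl yl xP yP; apply/eqP/negPn/negP => xy.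
have := ntP l l0 Pl; apply/negP; rewrite -leqNgt.
apply: (@leq_trans #|[set P; x; y]|).
  by rewrite -setUA cardsU1 cards2 xy !inE negb_or !(eq_sym P) xP yP.
by apply/subset_leq_card/subsetP=> z; rewrite -setUA => /setU1P[->|/set2P[]->]; apply/setIP.
Qed.

End Lines.

Section Interpolation.
Variable F : finFieldType.

Lemma expf_card_pred (x : F) : x ^+ #|F|.-1 = (x != 0)%:R.
Proof.
have F_gt1 := finNzRing_gt1 F.
have [->|x_neq0] := eqVneq x 0; first by rewrite expr0n; case: #|F| F_gt1 => [|[|]].
by apply: (mulfI x_neq0); rewrite -exprS prednK ?expf_card ?mulr1 // ltnW.
Qed.

(* By Fermat, [1 - (X - a)^(q-1)] is the indicator polynomial of [a]. *)
Lemma poly_of_fun (g : F -> F) : exists f : {poly F}, forall c, f.[c] = g c.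
Proof.
exists (\sum_a g a *: (1 - ('X - a%:P) ^+ #|F|.-1)) => c.
rewrite horner_sum (bigD1 c) //= big1 => [|a /negPf ac].
  by rewrite !hornerE subrr expf_card_pred eqxx /= subr0 mulr1.
by rewrite !hornerE expf_card_pred subr_eq0 eq_sym ac /= subrr mulr0.
Qed.

End Interpolation.

Section AffineChart.
Variables (F : finFieldType) (S : {set P2 F}) (P Q : P2 F) (A : 'M[F]_3).
Hypotheses (cardS : #|S| = (#|F| + 2)%N) (PS : P \in S) (QS : Q \in S) (PQ : P != Q).
Hypotheses (ntP : no_trisecant_through S P) (unitA : A \in unitmx).
Hypotheses (QA : val Q *m A = mk3 1 0 0) (PA : val P *m A = mk3 0 1 0).

(* The affine part of S in the chart x2 = 1: P and Q are its points at infinity. *)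
Let Saff := S :\ P :\ Q.

Let SaffP y : y \in Saff -> [/\ y \in S, y != P & y != Q].
Proof. by rewrite !inE => /and3P[]. Qed.

Lemma card_Saff : #|Saff| = #|F|.
Proof.
by move: cardS; rewrite (cardsD1 P) PS (cardsD1 Q) !inE eq_sym PQ QS addn2 => -[].
Qed.

Lemma P_in_pline a c : P \in pline (A *m col3 a 0 c).
Proof. by rewrite in_pline PA !mk3E /= !mul0r mulr0 !addr0. Qed.

Lemma Q_in_pline b c : Q \in pline (A *m col3 0 b c).
Proof. by rewrite in_pline QA !mk3E /= !mul0r mulr0 !addr0. Qed.

Lemma Saff_coord2_neq0 y : y \in Saff -> (val y *m A) 0 2 != 0.
Proof.
case/SaffP=> yS yP yQ; apply: contra_neq yQ => y2.
have l0 : A *m col3 0 0 1 != 0 by rewrite mul_unitmx_col3_neq0 // oner_eq0 !orbT.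
apply: (no_trisecant_eq ntP l0 PS (P_in_pline 0 1) yS QS _ (Q_in_pline 0 1)) => //.
  by rewrite in_pline y2 !mulr0 mulr1 !addr0.
by rewrite eq_sym.
Qed.

Definition xcoord (y : P2 F) := (val y *m A) 0 0 / (val y *m A) 0 2.
Definition ycoord (y : P2 F) := (val y *m A) 0 1 / (val y *m A) 0 2.

Lemma Saff_coordE y :
  y \in Saff -> val y *m A = (val y *m A) 0 2 *: mk3 (xcoord y) (ycoord y) 1.
Proof.
move=> /Saff_coord2_neq0; rewrite /xcoord /ycoord; move: (val y *m A) => w w2.
by rewrite {1}[w]mk3_row scale_mk3 !(mulrC (w 0 2)) !divfK // mul1r.
Qed.

Lemma xcoord_pline y : y \in Saff -> y \in pline (A *m col3 1 0 (- xcoord y)).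
Proof.
move=> y_aff; rewrite in_pline {1 2}(Saff_coordE y_aff) !mxE /= mulr1 mulr0 addr0 mulrN.
by rewrite mulrCA mulrC subrr.
Qed.

Lemma ycoord_pline y : y \in Saff -> y \in pline (A *m col3 0 1 (- ycoord y)).
Proof.
move=> y_aff; rewrite in_pline {1 2}(Saff_coordE y_aff) !mxE /= mulr1 mulr0 add0r mulrN.
by rewrite mulrCA mulrC subrr.
Qed.

Lemma xcoord_inj : {in Saff &, injective xcoord}.
Proof.
move=> y y' y_aff y'_aff eq_x; have [yS yP _] := SaffP y_aff; have [y'S y'P _] := SaffP y'_aff.
have l0 : A *m col3 1 0 (- xcoord y) != 0 by rewrite mul_unitmx_col3_neq0 ?oner_eq0.
apply: (no_trisecant_eq ntP l0 PS (P_in_pline _ _) yS y'S) => //; first exact: xcoord_pline.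
by rewrite eq_x; apply: xcoord_pline.
Qed.

Lemma xcoord_onto c : exists2 y, y \in Saff & c = xcoord y.
Proof.
apply/imsetP; suff -> : xcoord @: Saff = [set: F] by [].
by apply/eqP; rewrite eqEcard subsetT cardsT (card_in_imset xcoord_inj) card_Saff leqnn.
Qed.

Definition graph (c : F) : F :=
  if [pick y in Saff | xcoord y == c] is Some y then ycoord y else 0.

Lemma graph_xcoord y : y \in Saff -> graph (xcoord y) = ycoord y.
Proof.
move=> y_aff; rewrite /graph; case: pickP => [y' /andP[y'_aff /eqP eq_x] | no_y].
  by rewrite (xcoord_inj y'_aff y_aff eq_x).
by move: (no_y y); rewrite y_aff eqxx.
Qed.

Lemma pimage_Sf (f : {poly F}) : (forall c, f.[c] = graph c) -> pimage A S = Sf f.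
Proof.
move=> fE; apply/setP=> x; rewrite !inE; apply/existsP/or3P => [[y /andP[yS yx]]|].
  have xE u k : pnormal u -> peq (k *: u) (val x) -> val x = u.
    by move=> nu; apply: peq_scale_pnormal nu (valP x).
  have [yP|yP] := eqVneq y P.
    move: yx; rewrite yP PA -{1}[mk3 _ _ _]scale1r => /xE ->; last exact: pnormal_e1.
    exact: Or33.
  have [yQ|yQ] := eqVneq y Q.
    move: yx; rewrite yQ QA -{1}[mk3 _ _ _]scale1r => /xE ->; last exact: pnormal_e0.
    exact: Or32.
  have y_aff : y \in Saff by rewrite !inE yP yQ.
  move: yx; rewrite (Saff_coordE y_aff) => /xE -> //; last exact: pnormal_mk3.
  by apply: Or31; apply/existsP; exists (xcoord y); rewrite fE graph_xcoord.
case=> [/existsP[c /eqP xE]|/eqP xE|/eqP xE].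
- have [y y_aff cE] := xcoord_onto c; have [yS _ _] := SaffP y_aff.
  exists y; rewrite yS (Saff_coordE y_aff) xE fE cE graph_xcoord //.
  exact/peq_scale/Saff_coord2_neq0.
- by exists Q; rewrite QS QA xE -{1}[mk3 _ _ _]scale1r peq_scale ?oner_eq0.
- by exists P; rewrite PS PA xE -{1}[mk3 _ _ _]scale1r peq_scale ?oner_eq0.
Qed.

Lemma graph_inj : no_trisecant_through S Q -> injective graph.
Proof.
move=> ntQ c c'; have [y y_aff ->] := xcoord_onto c; have [y' y'_aff ->] := xcoord_onto c'.
rewrite !graph_xcoord // => eq_y; congr xcoord.
have [yS _ yQ] := SaffP y_aff; have [y'S _ y'Q] := SaffP y'_aff.
have l0 : A *m col3 0 1 (- ycoord y) != 0 by rewrite mul_unitmx_col3_neq0 ?oner_eq0 ?orbT.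
apply: (no_trisecant_eq ntQ l0 QS (Q_in_pline _ _) yS y'S) => //; first exact: ycoord_pline.
by rewrite eq_y; apply: ycoord_pline.
Qed.

End AffineChart.

Lemma Sf_normal_form (F : finFieldType) (S : {set P2 F}) (P Q : P2 F) :
  #|S| = (#|F| + 2)%N -> P \in S -> Q \in S -> P != Q -> no_trisecant_through S P ->
  exists2 A : 'M[F]_3, A \in unitmx & exists f : {poly F},
    pimage A S = Sf f /\ (no_trisecant_through S Q -> bijective (fun c => f.[c])).
Proof.
move=> cardS PS QS PQ ntP.
have QP : val Q != val P by rewrite val_eqE eq_sym.
have [A unitA [QA PA]] := pnormal_frame (valP Q) (valP P) QP.
have [f fE] := poly_of_fun (graph S P Q A).
exists A => //; exists f; split.
  exact: (pimage_Sf cardS PS QS PQ ntP unitA QA PA fE).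
by move=> ntQ; apply: injF_bij => c c'; rewrite /= !fE; apply: graph_inj.
Qed.

Theorem lemma2p1 (F : finFieldType) (S : {set P2 F}) :
  #|S| = (#|F| + 2)%N ->
  ((exists2 P, P \in S & no_trisecant_through S P) ->
     exists A : 'M[F]_3, A \in unitmx /\ exists f : {poly F}, pimage A S = Sf f) /\
  ((exists P1 P2, [/\ P1 \in S, P2 \in S, P1 != P2,
                     no_trisecant_through S P1 & no_trisecant_through S P2]) ->
     exists A : 'M[F]_3, A \in unitmx /\
       exists f : {poly F}, bijective (fun c : F => f.[c]) /\ pimage A S = Sf f).
Proof.
move=> cardS; split=> [[P PS ntP] | [P [Q [PS QS PQ ntP ntQ]]]].
  have : (0 < #|S :\ P|)%N by move: cardS; rewrite (cardsD1 P) PS addn2 add1n => -[->].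
  case/card_gt0P=> Q; rewrite !inE eq_sym => /andP[PQ QS].
  have [A unitA [f [SAf _]]] := Sf_normal_form cardS PS QS PQ ntP.
  by exists A; split => //; exists f.
have [A unitA [f [SAf bij_f]]] := Sf_normal_form cardS PS QS PQ ntP.
by exists A; split => //; exists f; split => //; apply: bij_f.
Qed.
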